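(* There is a constant $c>0$ such that for every sufficiently large $n$ there exists an input $x\in\mathrm{Hex}_n^{-1}( * )$ with $\mathrm{C}_{\bar 0}(\mathrm{Hex}_n,x)\ge c\,n^{1.5}$ and $\mathrm{C}_{\bar 1}(\mathrm{Hex}_n,x)\ge c\,n^{1.5}$.
   Context: Inputs to $\mathrm{Hex}_n\colon\{0,1\}^{n\times n}\to\{0,1,*\}$ are $n\times n$ boolean matrices. Two entries of $[n]\times[n]$ are connected if they are horizontally or vertically adjacent (not diagonally). A $1$-path in $x$ is a sequence of $1$-entries, consecutive ones connected, starting in the topmost row and ending in the bottommost row; a $0$-path is a sequence of $0$-entries, consecutive ones connected, starting in the leftmost column and ending in the rightmost column; the length of a path is its number of entries. $\mathrm{Hex}_n(x)=1$ if $x$ contains a $1$-path of length at most $2n$; $\mathrm{Hex}_n(x)=0$ if $x$ contains a $0$-path of length at most $2n$; $\mathrm{Hex}_n(x)=*$ otherwise. For a partial function $f$: a partial input $\rho$ is consistent with $x$ if it agrees with $x$ on its non-$*$ entries; its size is the number of non-$*$ entries; for $\Sigma\subseteq\{0,1,*\}$, $\rho$ is a $\Sigma$-certificate for $x$ if it is consistent with $x$ and $f(x')\in\Sigma$ for every $x'$ consistent with $\rho$; $\mathrm{C}_\Sigma(f,x)$ is the least size of a $\Sigma$-certificate for $x$; $\bar0=\{1,*\}$ and $\bar1=\{0,*\}$. *)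

From HB Require Import structures.
From mathcomp Require Import all_boot all_order all_algebra.
From mathcomp Require Import boolp reals exp.
Set Implicit Arguments. Unset Strict Implicit. Unset Printing Implicit Defensive.

(* Inputs: n x n boolean matrices; cells are pairs (row, column). *)
Definition cell (n : nat) := ('I_n * 'I_n)%type.

Definition adj (n : nat) (p q : cell n) : bool :=
  ((p.1 == q.1) && (((p.2 : nat).+1 == q.2) || ((q.2 : nat).+1 == p.2))) ||
  ((p.2 == q.2) && (((p.1 : nat).+1 == q.1) || ((q.1 : nat).+1 == p.1))).

Definition bseq (n : nat) (x : 'M[bool]_n) (b : bool) (s : seq (cell n)) : bool :=
  if s is c :: s' then path (@adj n) c s' && all (fun p => x p.1 p.2 == b) s
  else false.

Definition one_path (n : nat) (x : 'M[bool]_n) (s : seq (cell n)) : bool :=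
  if s is c :: s' then
    [&& bseq x true s, (c.1 : nat) == 0 & ((last c s').1 : nat) == n.-1]
  else false.

Definition zero_path (n : nat) (x : 'M[bool]_n) (s : seq (cell n)) : bool :=
  if s is c :: s' then
    [&& bseq x false s, (c.2 : nat) == 0 & ((last c s').2 : nat) == n.-1]
  else false.

Definition has_short_1path (n : nat) (x : 'M[bool]_n) : Prop :=
  exists s, one_path x s /\ size s <= 2 * n.
Definition has_short_0path (n : nat) (x : 'M[bool]_n) : Prop :=
  exists s, zero_path x s /\ size s <= 2 * n.

(* Output values {0,1,*} encoded as option bool:
   Some true = 1, Some false = 0, None = *. *)
Definition Hex (n : nat) (x : 'M[bool]_n) : option bool :=
  if `[< has_short_1path x >] then Some true
  else if `[< has_short_0path x >] then Some false
  else None.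

Definition bar0 : pred (option bool) := fun v => v != Some false.
Definition bar1 : pred (option bool) := fun v => v != Some true.

(* Partial inputs: entries in {0,1,*}, with None = *. *)
Definition consistent (n : nat) (rho : 'M[option bool]_n) (x : 'M[bool]_n) : bool :=
  [forall i, forall j, (rho i j == None) || (rho i j == Some (x i j))].

Definition psize (n : nat) (rho : 'M[option bool]_n) : nat :=
  #|[pred p : cell n | rho p.1 p.2 != None]|.

Definition is_cert (n : nat) (f : 'M[bool]_n -> option bool) (Sigma : pred (option bool))
    (x : 'M[bool]_n) (rho : 'M[option bool]_n) : Prop :=
  consistent rho x /\ forall x' : 'M[bool]_n, consistent rho x' -> Sigma (f x').

(* C_Sigma(f, x): least size of a Sigma-certificate for x (default n*n,
   the maximum possible size, if none exists). *)
Definition Ccert (n : nat) (f : 'M[bool]_n -> option bool) (Sigma : pred (option bool))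
    (x : 'M[bool]_n) : nat :=
  \big[minn/(n * n)]_(rho : 'M[option bool]_n | `[< is_cert f Sigma x rho >]) psize rho.

From HB Require Import structures.
From mathcomp Require Import all_boot all_order all_algebra.
From mathcomp Require Import boolp reals exp.
From mathcomp Require Import zify ring lra.
From Stdlib Require Import PeanoNat.
Set Implicit Arguments. Unset Strict Implicit. Unset Printing Implicit Defensive.

(* Take h ~ sqrt n and the input whose odd rows are walls of 0s, each pierced
   by gaps every 2h columns, consecutive walls staggered by h, all other rows
   being 1s.  A 1-path has to move about h columns between consecutive walls,
   so it is longer than 2n, and the gaps block every 0-path: the value is *.
   A {1,*}-certificate must rule out the short 0-path that runs along a wall
   and bypasses each gap through the row above at distance d: for every wall
   and every d < h it reveals a cell, about n h / 2 cells in all.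
   A {0,*}-certificate must rule out, for every column, the 1-path that goes
   straight down it and sidesteps each revealed 0 of a wall through a gap at
   most 5h away; each such sidestep costs O(h), so every column holds about
   n / (20 h) revealed 0s, about n^2 / (20 h) cells in all.  Both bounds are
   of order n^1.5. *)

Lemma path_potential_le n (x : 'M[bool]_n) b (f : cell n -> nat) c s :
  (forall p q, adj p q -> x p.1 p.2 = b -> x q.1 q.2 = b -> f q <= (f p).+1) ->
  path (@adj n) c s -> all (fun p => x p.1 p.2 == b) (c :: s) ->
  f (last c s) <= f c + size s.
Proof.
move=> f_lip; elim: s c => [|d s IHs] c /=; first by rewrite addn0.
move=> /andP[adj_cd path_s] /and3P[/eqP xc /eqP xd all_s].
have := IHs d path_s; rewrite /= xd eqxx all_s => /(_ isT).
have := f_lip _ _ adj_cd xc xd; lia.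
Qed.

Lemma path_invariant n (x : 'M[bool]_n) b (I : pred (cell n)) c s :
  (forall p q, adj p q -> x p.1 p.2 = b -> x q.1 q.2 = b -> I p -> I q) ->
  path (@adj n) c s -> all (fun p => x p.1 p.2 == b) (c :: s) ->
  I c -> I (last c s).
Proof.
move=> I_step; elim: s c => [|d s IHs] c //= /andP[adj_cd path_s].
move=> /and3P[/eqP xc /eqP xd all_s] Ic.
by apply: IHs => //=; [rewrite xd eqxx | exact: I_step adj_cd xc xd Ic].
Qed.

Definition dist (a b : nat) := (a - b) + (b - a).

Definition nat_adj (a b : nat) := (a.+1 == b) || (b.+1 == a).

Definition between (a b j : nat) := minn a b <= j <= maxn a b.

Definition towards (a b k : nat) : nat := if a <= b then a + k else a - k.

Definition walk (a b : nat) : seq nat := [seq towards a b k | k <- iota 1 (dist a b)].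

Lemma path_iota (r : rel nat) (f : nat -> nat) k d :
  (forall i, k <= i < k + d -> r (f i) (f i.+1)) ->
  path r (f k) [seq f i | i <- iota k.+1 d].
Proof.
elim: d k => [|d IHd] k //= f_step.
by rewrite f_step ?IHd // => [i ?|]; [apply: f_step|]; lia.
Qed.

Lemma last_iota a k : last a (iota a.+1 k) = a + k.
Proof. by elim: k a => [|k IHk] a /=; rewrite ?addn0 // IHk addSnnS. Qed.

Lemma towards0 a b : towards a b 0 = a.
Proof. by rewrite /towards; case: ifP; lia. Qed.

Lemma walk_last a b : last a (walk a b) = b.
Proof.
rewrite -{1}(towards0 a b) last_map (last_iota 0) /towards /dist.
by case: (leqP a b); lia.
Qed.

Lemma walk_path a b : path nat_adj a (walk a b).
Proof.
rewrite -{1}(towards0 a b); apply: path_iota => i.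
by rewrite /towards /nat_adj /dist; case: (leqP a b); lia.
Qed.

Lemma size_walk a b : size (walk a b) = dist a b.
Proof. by rewrite size_map size_iota. Qed.

Lemma mem_walk a b j : j \in walk a b -> between a b j.
Proof.
by case/mapP => k; rewrite mem_iota /between /towards /dist => k_range ->; case: (leqP a b); lia.
Qed.

Definition cell_at m (i j : nat) : cell m.+1 := (inord i, inord j).

Lemma adj_cell_at_row m i j j' : j <= m -> j' <= m -> nat_adj j j' ->
  adj (cell_at m i j) (cell_at m i j').
Proof.
by move=> j_le j'_le jj'; rewrite /adj /cell_at /=; apply/orP; left; rewrite eqxx /= !inordK.
Qed.

Lemma adj_cell_at_col m i j : i < m -> j <= m -> adj (cell_at m i j) (cell_at m i.+1 j).
Proof.
by move=> i_lt j_le; rewrite /adj /cell_at /= eqxx /= !inordK ?eqxx ?orbT //; lia.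
Qed.

Section Staircase.

Variables (m : nat) (q : nat -> nat).
Hypothesis q_le : forall i, i <= m -> q i <= m.

(* The staircase of [q] from row [k]: along row [i] from column [q i] to
   column [q i.+1], then one step down, for [r] rows.  The start cell
   [cell_at m k (q k)] is not included. *)
Fixpoint stair (k r : nat) : seq (cell m.+1) :=
  if r is r'.+1 then
    [seq cell_at m k j | j <- walk (q k) (q k.+1)] ++ cell_at m k.+1 (q k.+1) :: stair k.+1 r'
  else [::].

Lemma stair_last k r : last (cell_at m k (q k)) (stair k r) = cell_at m (k + r) (q (k + r)).
Proof.
elim: r k => [|r IHr] k /=; first by rewrite addn0.
by rewrite last_cat /= IHr addSnnS.
Qed.

Lemma size_stair k r :
  size (stair k r) = r + \sum_(t < r) dist (q (k + t)) (q (k + t).+1).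
Proof.
elim: r k => [|r IHr] k /=; first by rewrite big_ord0.
rewrite size_cat size_map size_walk /= IHr big_ord_recl addn0.
under [in RHS]eq_bigr => t _ do rewrite /bump /= -addSnnS.
by rewrite addnS addnCA.
Qed.

Lemma stair_path k r : k + r <= m -> path (@adj m.+1) (cell_at m k (q k)) (stair k r).
Proof.
elim: r k => [|r IHr] k //= kr_le.
have [qk_le qk1_le] : q k <= m /\ q k.+1 <= m by split; apply: q_le; lia.
rewrite cat_path last_map walk_last /= adj_cell_at_col ?IHr ?andbT //; try lia.
apply: (homo_path_in (P := [pred j | j <= m])) (walk_path _ _) => [j j'|].
  by rewrite !inE; apply: adj_cell_at_row.
by apply/allP => j /= /predU1P[-> | /mem_walk]; rewrite /between; lia.
Qed.

Lemma all_stair (P : pred (cell m.+1)) k r :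
  (forall i j, k <= i < k + r -> between (q i) (q i.+1) j -> P (cell_at m i j)) ->
  P (cell_at m (k + r) (q (k + r))) ->
  all P (cell_at m k (q k) :: stair k r).
Proof.
elim: r k => [|r IHr] k P_strip P_last /=; first by rewrite -(addn0 k) P_last.
have P_row j : between (q k) (q k.+1) j -> P (cell_at m k j) by apply: P_strip; lia.
rewrite P_row; last by rewrite /between; lia.
rewrite all_cat IHr ?andbT; last by rewrite addSnnS.
- by apply/allP => _ /mapP[j /mem_walk j_btw ->]; exact: P_row.
- by move=> i j ik_range; apply: P_strip; lia.
Qed.

Lemma staircase_path (P : pred (cell m.+1)) :
  (forall i j, i < m -> between (q i) (q i.+1) j -> P (cell_at m i j)) ->
  P (cell_at m m (q m)) ->
  exists c s, [/\ path (@adj m.+1) c s, all P (c :: s), (c.1 : nat) = 0,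
    ((last c s).1 : nat) = m & size (c :: s) = m.+1 + \sum_(t < m) dist (q t) (q t.+1)].
Proof.
move=> P_strip P_last; exists (cell_at m 0 (q 0)), (stair 0 m); split.
- exact: stair_path.
- by apply: all_stair.
- by rewrite /cell_at /= inordK.
- by rewrite stair_last /cell_at /= inordK.
- by rewrite /= size_stair.
Qed.

End Staircase.

Lemma dist_ge_mod M a b : a = b %[mod M] -> a != b -> M <= dist a b.
Proof.
move=> /eqP ab_mod ne_ab; rewrite /dist.
case: (leqP b a) => [ba|/ltnW ab]; [move: ab_mod | move: ab_mod; rewrite eq_sym];
  rewrite eqn_mod_dvd // => /dvdn_leq; lia.
Qed.

Lemma dist_ge_half_mod h a b : a = b + h %[mod h.*2] -> h <= dist a b.
Proof.
case: (a =P b + h) => [->|/eqP ne_abh]; first by rewrite /dist; lia.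
by move/dist_ge_mod/(_ ne_abh); rewrite /dist; lia.
Qed.

(* Distance from [j] to the nearest integer congruent to [u] modulo [2h]. *)
Definition circ_dist (h u j : nat) : nat :=
  let r := (j + (h.*2 - u)) %% h.*2 in minn r (h.*2 - r).

Lemma circ_dist_S h u j : 0 < h -> dist (circ_dist h u j) (circ_dist h u j.+1) <= 1.
Proof.
move=> h_gt0; rewrite /circ_dist addSn /dist.
set r := _ %% h.*2.
have -> : (j + (h.*2 - u)).+1 %% h.*2 = r.+1 %% h.*2 by rewrite -addn1 -modnDml addn1.
have r_lt : r < h.*2 by rewrite ltn_pmod // double_gt0.
have [r1_lt|r1_ge] := ltnP r.+1 h.*2; first by rewrite modn_small //; lia.
have -> : r.+1 = h.*2 by lia.
by rewrite modnn; lia.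
Qed.

Lemma circ_dist_eq0 h u j : 0 < h -> j %% h.*2 = u -> circ_dist h u j = 0.
Proof.
move=> h_gt0 j_u; have u_lt : u < h.*2 by rewrite -j_u ltn_pmod // double_gt0.
by rewrite /circ_dist -modnDml j_u subnKC ?modnn //; lia.
Qed.

Lemma circ_dist_eqh h u j :
  0 < h -> u <= h -> j = u + h %[mod h.*2] -> circ_dist h u j = h.
Proof.
move=> h_gt0 u_le j_u; rewrite /circ_dist -modnDml j_u modnDml.
have -> : u + h + (h.*2 - u) = h + h.*2 by lia.
rewrite modnDr modn_small; lia.
Qed.

Definition wall (n i : nat) : bool := odd i && (i.+2 <= n).

Definition gap_offset (h i : nat) : nat := if i %% 4 == 1 then 0 else h.

Definition gap (n h i j : nat) : bool :=
  [&& wall n i, j %% h.*2 == gap_offset h i, h <= j & j + h < n].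

Definition wall_entry (n h i j : nat) : bool := ~~ wall n i || gap n h i j.

Definition wall_input (n h : nat) : 'M[bool]_n := \matrix_(i, j) wall_entry n h i j.

Lemma wall_inputE n h (i j : 'I_n) : wall_input n h i j = wall_entry n h i j.
Proof. by rewrite mxE. Qed.

Lemma gap_offset_le h i : gap_offset h i <= h.
Proof. by rewrite /gap_offset; case: ifP. Qed.

Lemma gap_offset_shift h i : odd i -> gap_offset h i.+2 = gap_offset h i + h %[mod h.*2].
Proof.
move=> i_odd; have i_mod2 : i %% 2 = 1 by rewrite modn2 i_odd.
rewrite /gap_offset; case: ifP => /eqP i2_mod4; case: ifP => /eqP i_mod4; try lia.
by rewrite addnn modnn mod0n.
Qed.

Lemma gap_mod n h i j : gap n h i j -> j %% h.*2 = gap_offset h i.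
Proof. by case/and4P => _ /eqP. Qed.

Lemma gap_bounds n h i j : gap n h i j -> h <= j /\ j + h < n.
Proof. by case/and4P => _ _ -> ->. Qed.

Lemma gaps_far n h i j j' : gap n h i j -> gap n h i j' -> j != j' -> h.*2 <= dist j j'.
Proof. by move=> /gap_mod j_mod /gap_mod j'_mod; apply: dist_ge_mod; rewrite j_mod j'_mod. Qed.

Lemma gaps_shifted n h i j j' : 0 < h -> odd i ->
  gap n h i j -> gap n h i.+2 j' -> h <= dist j' j.
Proof.
move=> h_gt0 i_odd /gap_mod j_mod /gap_mod j'_mod; apply: dist_ge_half_mod.
have off_le := gap_offset_le h i.+2.
by rewrite j'_mod -modnDml j_mod -gap_offset_shift // modn_small //; lia.
Qed.

Definition near_gap (n h i c : nat) : nat :=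
  (minn c (n - 5 * h) %/ h.*2).+1 * h.*2 + gap_offset h i.

Lemma near_gapP n h i c : 0 < h -> 6 * h <= n -> wall n i -> c < n ->
  gap n h i (near_gap n h i c) /\ dist c (near_gap n h i c) <= 5 * h.
Proof.
move=> h_gt0 h_le wall_i c_lt; rewrite /near_gap.
set a := minn c (n - 5 * h).
have a_mod_lt : a %% h.*2 < h.*2 by rewrite ltn_pmod // double_gt0.
have off_le := gap_offset_le h i.
rewrite /gap wall_i modnMDl modn_small ?eqxx /=; last lia.
by move: (divn_eq a h.*2); rewrite /dist mulSn /a; move: (_ * h.*2) => Q; lia.
Qed.

Definition wall_above (i : nat) : nat := if odd i then i - 2 else i - 1.

(* [h] per wall above row [i], plus, strictly between two walls, the distance
   to the nearest gap of the wall above.  The gaps of the wall below are at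
   distance [h] from those, so [i + potential n h i j] increases by at most
   one along every step of a 1-path. *)
Definition potential (n h i j : nat) : nat :=
  if wall n i then i./2 * h
  else if i == 0 then 0
  else (wall_above i)./2 * h + circ_dist h (gap_offset h (wall_above i)) j.

Lemma potential_vertical n h i j : 0 < h -> 2 < n -> i.+1 < n ->
  wall_entry n h i j -> wall_entry n h i.+1 j ->
  potential n h i.+1 j <= potential n h i j <= (potential n h i.+1 j).+2.
Proof.
move=> h_gt0 n_gt2 i1_lt; rewrite /wall_entry /potential /wall_above /=.
have half_i := odd_double_half i; have half_i1 := odd_double_half (i - 1).
case wall_i: (wall n i); case wall_i1: (wall n i.+1) => /=.
- by move: wall_i wall_i1; rewrite /wall /=; lia.
- move=> gap_ij _; move: wall_i => /andP[i_odd _]; rewrite i_odd /= subn1 /=.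
  by rewrite circ_dist_eq0 ?(gap_mod gap_ij) //; lia.
- move=> _ gap_i1j; move: wall_i1 => /andP[/= i_even _]; rewrite (negbTE i_even).
  case: (i =P 0) => [-> //|i_neq0].
  have i1_odd : odd (i - 1) by lia.
  rewrite circ_dist_eqh ?gap_offset_le //; last first.
    rewrite -gap_offset_shift // (_ : (i - 1).+2 = i.+1); last lia.
    by rewrite (gap_mod gap_i1j) modn_small //; have := gap_offset_le h i.+1; lia.
  have -> : uphalf i = ((i - 1)./2).+1.
    by rewrite uphalf_half (negbTE i_even); move: half_i half_i1; rewrite i1_odd; lia.
  rewrite mulSn; lia.
- move=> _ _; case: (i =P 0) => [i0|i_neq0]; first by rewrite i0 /wall /= n_gt2 in wall_i1.
  move: wall_i wall_i1; rewrite /wall /=.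
  case: (boolP (odd i)) => /= i_odd; first lia.
  by move=> _ n_eq; rewrite (_ : i.+1 - 2 = i - 1) //; lia.
Qed.

Lemma potential_row n h i j : 0 < h ->
  wall_entry n h i j -> wall_entry n h i j.+1 ->
  dist (potential n h i j) (potential n h i j.+1) <= 1.
Proof.
move=> h_gt0; rewrite /wall_entry /potential.
case: (wall n i) => /= [gap_ij gap_ij1 | _ _]; last first.
  have := circ_dist_S (gap_offset h (wall_above i)) j h_gt0.
  by case: (i == 0); rewrite /dist //; lia.
by have := gaps_far gap_ij gap_ij1; rewrite /dist; lia.
Qed.

Lemma potential_step n h (x : 'M[bool]_n) : 0 < h -> 2 < n ->
  (forall i j, x i j -> wall_entry n h i j) ->
  forall p q : cell n, adj p q -> x p.1 p.2 = true -> x q.1 q.2 = true ->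
  (q.1 : nat) + potential n h q.1 q.2 <= ((p.1 : nat) + potential n h p.1 p.2).+1.
Proof.
move=> h_gt0 n_gt2 x_le [i j] [i' j'] /=; rewrite /adj /=.
move=> /orP[/andP[/eqP <- /orP[] /eqP jj'] | /andP[/eqP <- /orP[] /eqP ii']] /x_le xp /x_le xq.
- by have := @potential_row n h i j h_gt0; rewrite jj' => /(_ xp xq); rewrite /dist; lia.
- by have := @potential_row n h i j' h_gt0; rewrite jj' => /(_ xq xp); rewrite /dist; lia.
- by have := @potential_vertical n h i j h_gt0 n_gt2; rewrite ii' => /(_ (ltn_ord i') xp xq); lia.
- by have := @potential_vertical n h i' j h_gt0 n_gt2; rewrite ii' => /(_ (ltn_ord i) xq xp); lia.
Qed.

Lemma potential_last_row n h j : 3 < n -> (n - 3)./2 * h <= potential n h n.-1 j.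
Proof.
move=> n_gt3; rewrite /potential /wall (_ : n.-1.+2 <= n = false) ?andbF; last lia.
rewrite (_ : n.-1 == 0 = false); last lia.
apply: leq_trans (leq_addr _ _); rewrite leq_mul2r; apply/orP; right.
by apply: half_leq; rewrite /wall_above; case: ifP; lia.
Qed.

Lemma one_path_long n h (x : 'M[bool]_n) : 4 <= h -> 16 <= n ->
  (forall i j, x i j -> wall_entry n h i j) -> forall s, one_path x s -> 2 * n < size s.
Proof.
move=> h_ge n_ge x_le [|c s] //= /and3P[/andP[c_path all_s] /eqP c_top /eqP s_bot].
have [h_gt0 n_gt2 n_gt3] : [/\ 0 < h, 2 < n & 3 < n] by split; lia.
have := path_potential_le (potential_step h_gt0 n_gt2 x_le) c_path all_s.
rewrite c_top s_bot (_ : potential n h 0 c.2 = 0) //.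
have := potential_last_row h (last c s).2 n_gt3.
have : 4 * (n - 3)./2 <= (n - 3)./2 * h by rewrite mulnC leq_mul2l h_ge orbT.
have := odd_double_half (n - 3); lia.
Qed.

Lemma zero_path_wall_input n h s : 0 < h -> 6 * h <= n -> ~~ zero_path (wall_input n h) s.
Proof.
move=> h_gt0 h_le; apply/negP.
case: s => [|c s] //= /and3P[/andP[c_path all_s] /eqP c_left /eqP s_right].
move: (all_s) => /andP[/eqP]; rewrite wall_inputE /wall_entry => /norP[/negPn wall_c _] _.
have [gap_l _] := near_gapP h_gt0 h_le wall_c (ltn_ord c.2).
set l := near_gap _ _ _ _ in gap_l; have [l_ge l_lt] := gap_bounds gap_l.
pose I (p : cell n) := (p.1 == c.1) && (p.2 < l).
suff : I (last c s) by rewrite /I s_right; lia.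
apply: (path_invariant _ c_path all_s); last by rewrite /I eqxx c_left; lia.
move=> [i j] [i' j'] /=; rewrite !wall_inputE /wall_entry /I /adj /=.
move=> /orP[/andP[/eqP <- jj'] | /andP[_ ii']] /norP[/negPn wall_i _] /norP[/negPn wall_i' no_gap].
  move=> /andP[/eqP i_c j_lt]; rewrite i_c eqxx /=.
  have : j' != l :> nat by apply/eqP => j'l; move: no_gap; rewrite i_c j'l gap_l.
  by case/orP: jj' => /eqP; lia.
move: wall_i wall_i'; rewrite /wall; case/orP: ii' => /eqP <- /=.
  by move=> /andP[-> _] /andP[].
by move=> /andP[/negbTE -> _] /andP[].
Qed.

Lemma Hex_wall_input n h : 4 <= h -> 6 * h <= n -> 16 <= n -> Hex (wall_input n h) = None.
Proof.
move=> h_ge h_le n_ge; rewrite /Hex.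
case: asboolP => [[s [s_path s_size]] | _].
  have x_le i j : wall_input n h i j -> wall_entry n h i j by rewrite wall_inputE.
  by have := one_path_long h_ge n_ge x_le s_path; rewrite ltnNge s_size.
case: asboolP => // [[s [s_path _]]].
have h_gt0 : 0 < h by lia.
by have := zero_path_wall_input s h_gt0 h_le; rewrite s_path.
Qed.

Lemma Ccert_ge n (f : 'M[bool]_n -> option bool) Sigma x T : T <= n * n ->
  (forall rho, is_cert f Sigma x rho -> T <= psize rho) -> T <= Ccert f Sigma x.
Proof.
move=> T_le cert_ge; rewrite /Ccert; apply: (big_ind (fun v => T <= v)) => //.
- by move=> a b Ta Tb; rewrite leq_min Ta Tb.
- by move=> rho /asboolP /cert_ge.
Qed.

Lemma psize_sum n (rho : 'M[option bool]_n) :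
  psize rho = \sum_(i : 'I_n) \sum_(j : 'I_n) (rho i j != None).
Proof.
rewrite (pair_bigA _ (fun i j => (rho i j != None : nat))) /psize -sum1_card big_mkcond /=.
by apply: eq_bigr => p _; rewrite inE; case: (_ != _).
Qed.

Lemma adj_swap n (p q : cell n) : adj p q -> adj (p.2, p.1) (q.2, q.1).
Proof. by rewrite /adj /= orbC. Qed.

Lemma consistentP n (rho : 'M[option bool]_n) x i j : consistent rho x ->
  rho i j = None \/ rho i j = Some (x i j).
Proof. by move=> /forallP /(_ i) /forallP /(_ j) /orP[] /eqP; auto. Qed.

Definition fill1 n (rho : 'M[option bool]_n) : 'M[bool]_n :=
  \matrix_(i, j) (rho i j != Some false).
Definition fill0 n (rho : 'M[option bool]_n) : 'M[bool]_n :=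
  \matrix_(i, j) (rho i j == Some true).

Lemma consistent_fill1 n (rho : 'M[option bool]_n) : consistent rho (fill1 rho).
Proof. by apply/forallP => i; apply/forallP => j; rewrite mxE; case: (rho i j) => [[]|]. Qed.

Lemma consistent_fill0 n (rho : 'M[option bool]_n) : consistent rho (fill0 rho).
Proof. by apply/forallP => i; apply/forallP => j; rewrite mxE; case: (rho i j) => [[]|]. Qed.

Lemma Hex_one_path n (x : 'M[bool]_n) s : one_path x s -> size s <= 2 * n -> Hex x = Some true.
Proof. by move=> s_path s_size; rewrite /Hex; case: asboolP => // -[]; exists s. Qed.

Lemma Hex_zero_path n (x : 'M[bool]_n) s : ~ has_short_1path x ->
  zero_path x s -> size s <= 2 * n -> Hex x = Some false.
Proof.
move=> no1 s_path s_size; rewrite /Hex; case: asboolP => // _.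
by case: asboolP => // -[]; exists s.
Qed.

Lemma fill1_ge n (rho : 'M[option bool]_n) x i j : consistent rho x ->
  x i j || (rho i j != Some false) -> fill1 rho i j.
Proof. by move=> /(consistentP i j) []; rewrite mxE => ->; case: (x i j). Qed.

Lemma fill0_le n (rho : 'M[option bool]_n) x i j : consistent rho x ->
  fill0 rho i j -> x i j && (rho i j != None).
Proof. by move=> /(consistentP i j) []; rewrite mxE => ->; case: (x i j). Qed.

Lemma sparse_column n (rho : 'M[option bool]_n) K :
  psize rho < n * K.+1 -> exists c : 'I_n, \sum_(i < n) (rho i c == Some false) <= K.
Proof.
move=> size_lt; apply/existsP; apply: contraTT size_lt => /existsPn dense.
rewrite -leqNgt psize_sum exchange_big /= -[n in n * _]card_ord -sum_nat_const.
apply: leq_sum => j _; apply: (@leq_trans (\sum_(i < n) (rho i j == Some false))).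
  by rewrite ltnNge dense.
by apply: leq_sum => i _; case: (rho i j) => [[]|].
Qed.

Lemma sum_dist_succ_le (q : nat -> nat) c m :
  \sum_(t < m) dist (q t) (q t.+1) <= 2 * \sum_(t < m.+1) dist (q t) c.
Proof.
apply: (@leq_trans (\sum_(t < m) (dist (q t) c + dist (q t.+1) c))).
  by apply: leq_sum => t _; rewrite /dist; lia.
rewrite big_split /= mul2n -addnn leq_add //.
  by rewrite big_ord_recr leq_addr.
by rewrite big_ord_recl leq_addl.
Qed.

Section OnePathDownAColumn.

Variables (m h : nat) (rho : 'M[option bool]_m.+1) (c : 'I_m.+1).
Hypotheses (h_gt0 : 0 < h) (h_le : 6 * h <= m.+1).
Hypothesis rho_cons : consistent rho (wall_input m.+1 h).

Definition blocked (i : nat) : bool := wall m.+1 i && (rho (inord i) c == Some false).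

Definition detour (i : nat) : nat := if blocked i then near_gap m.+1 h i c else c.

(* A blocked wall is crossed through a nearby gap, reached along the row
   above and left along the row below. *)
Definition column_route (i : nat) : nat :=
  if wall m.+1 i then detour i else if wall m.+1 i.-1 then detour i.-1 else c.

Lemma detourP i : blocked i -> gap m.+1 h i (detour i) /\ dist c (detour i) <= 5 * h.
Proof.
move=> blk; have /andP[wall_i _] := blk.
by rewrite /detour blk; exact: near_gapP h_gt0 h_le wall_i (ltn_ord c).
Qed.

Lemma dist_detour i : dist (detour i) c <= 5 * h * blocked i.
Proof.
case: (boolP (blocked i)) => [/detourP[_] | unblocked]; first by rewrite /dist; lia.
by rewrite /detour (negbTE unblocked) /dist; lia.
Qed.

Lemma column_route_le i : column_route i <= m.
Proof.
have detour_le k : detour k <= m.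
  case: (boolP (blocked k)) => [/detourP[/gap_bounds] | unblocked]; first lia.
  by rewrite /detour (negbTE unblocked) -ltnS.
by rewrite /column_route; case: ifP => _ //; case: ifP => _ //; rewrite -ltnS.
Qed.

Lemma dist_column_route i : dist (column_route i) c <= 5 * h * (blocked i + blocked i.-1).
Proof.
rewrite /column_route mulnDr; case: ifP => _; first by have := dist_detour i; lia.
case: ifP => _; first by have := dist_detour i.-1; lia.
by rewrite /dist; lia.
Qed.

Lemma column_route_ones i j : i < m -> between (column_route i) (column_route i.+1) j ->
  fill1 rho (cell_at m i j).1 (cell_at m i j).2.
Proof.
move=> i_lt j_btw; have j_le : j <= m.
  by move: j_btw; rewrite /between; have := column_route_le i; have := column_route_le i.+1; lia.
rewrite /cell_at /=; apply: (fill1_ge rho_cons); rewrite wall_inputE !inordK //; last lia.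
rewrite /wall_entry; case wall_i: (wall m.+1 i) => //=.
have wall_i1 : wall m.+1 i.+1 = false by move: wall_i; rewrite /wall /=; case: (odd i).
move: j_btw; rewrite /between /column_route wall_i wall_i1 /= minnn maxnn -eqn_leq => /eqP <-.
case: (boolP (blocked i)) => [/detourP[-> _] // | unblocked].
rewrite /detour (negbTE unblocked) inord_val.
by move: unblocked; rewrite /blocked wall_i => ->; rewrite orbT.
Qed.

Lemma column_route_cost K : \sum_(i < m.+1) (rho i c == Some false) <= K -> K * (20 * h) <= m.+1 ->
  \sum_(t < m) dist (column_route t) (column_route t.+1) <= m.+1.
Proof.
move=> few_zeros K_le; apply: leq_trans (sum_dist_succ_le column_route c m) _.
have blocked_le : \sum_(i < m.+1) blocked i <= K.
  apply: leq_trans few_zeros; apply: leq_sum => i _.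
  by rewrite /blocked inord_val; case: (wall _ _).
have blocked_pred_le : \sum_(i < m.+1) blocked i.-1 <= \sum_(i < m.+1) blocked i.
  by rewrite big_ord_recl [X in _ <= X]big_ord_recr /= add0n leq_addr.
apply: (@leq_trans (2 * (5 * h * \sum_(i < m.+1) (blocked i + blocked i.-1)))).
  by rewrite leq_pmul2l // big_distrr /=; apply: leq_sum => i _; exact: dist_column_route.
rewrite big_split /=; apply: leq_trans K_le.
rewrite (_ : K * (20 * h) = 2 * (5 * h * (2 * K))); last ring.
by rewrite !leq_pmul2l ?muln_gt0 // mul2n -addnn leq_add // (leq_trans blocked_pred_le).
Qed.

Lemma short_one_path_down_column K :
  \sum_(i < m.+1) (rho i c == Some false) <= K -> K * (20 * h) <= m.+1 ->
  exists s, one_path (fill1 rho) s /\ size s <= 2 * m.+1.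
Proof.
move=> few_zeros K_le.
have last_one : fill1 rho (cell_at m m (column_route m)).1 (cell_at m m (column_route m)).2.
  apply: (fill1_ge rho_cons); rewrite wall_inputE /cell_at /= !inordK ?ltnS ?column_route_le //.
  by rewrite /wall_entry /wall ltnn andbF.
have [c0 [s [s_path s_ones c0_top s_bot s_size]]] :=
  staircase_path (fun i _ => column_route_le i) (P := fun p => fill1 rho p.1 p.2)
    column_route_ones last_one.
exists (c0 :: s); split; last by rewrite s_size; have := column_route_cost few_zeros K_le; lia.
rewrite /one_path /bseq /= s_path c0_top s_bot !eqxx !andbT /=.
by apply: sub_all s_ones => p; rewrite eqb_id.
Qed.

End OnePathDownAColumn.

Lemma bar1_cert_size m h (rho : 'M[option bool]_m.+1) : 0 < h -> 6 * h <= m.+1 ->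
  is_cert (@Hex m.+1) bar1 (wall_input m.+1 h) rho -> m.+1 * (m.+1 %/ (20 * h)).+1 <= psize rho.
Proof.
move=> h_gt0 h_le [rho_cons rho_cert]; rewrite leqNgt; apply/negP => /sparse_column[c few_zeros].
have [s [s_path s_size]] := short_one_path_down_column h_gt0 h_le rho_cons few_zeros (leq_divM _ _).
by have := rho_cert _ (consistent_fill1 rho); rewrite (Hex_one_path s_path s_size).
Qed.

Lemma count_residue_le N a M u : 0 < M ->
  \sum_(j < N) ((j + a) %% M == u) <= (N + a) %/ M + 1.
Proof.
move=> M_gt0; rewrite addn1 -(card_ord ((N + a) %/ M).+1).
have -> : \sum_(j < N) ((j + a) %% M == u) = #|[set j : 'I_N | (j + a) %% M == u]|.
  by rewrite -sum1_card [in RHS]big_mkcond /=; apply: eq_bigr => j _; rewrite inE; case: (_ == _).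
pose quot (j : 'I_N) : 'I_((N + a) %/ M).+1 := inord ((j + a) %/ M).
rewrite -(@card_in_imset _ _ quot) ?max_card // => j k; rewrite !inE => /eqP j_u /eqP k_u.
have quot_le (l : 'I_N) : (l + a) %/ M < ((N + a) %/ M).+1.
  by rewrite ltnS leq_div2r // leq_add2r ltnW.
move=> /(congr1 val); rewrite /= !inordK // => jk_quot; apply: val_inj => /=.
by have := divn_eq (j + a) M; have := divn_eq (k + a) M; rewrite j_u k_u jk_quot; lia.
Qed.

Lemma not_fill0 n (rho : 'M[option bool]_n) x i j : consistent rho x ->
  ~~ x i j || (rho i j == None) -> ~~ fill0 rho i j.
Proof. by move=> rho_cons; apply: contraL => /(fill0_le rho_cons) /andP[-> ->]. Qed.

Section ZeroPathAroundGaps.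

Variables (m h : nat) (rho : 'M[option bool]_m.+1) (i d : nat).
Hypotheses (h_gt0 : 0 < h) (rho_cons : consistent rho (wall_input m.+1 h)).
Hypotheses (wall_i : wall m.+1 i) (i_ge : 3 <= i) (d_gt0 : 0 < d) (d_lt : d < h).
Hypothesis unrevealed : forall (y : 'I_m.+1) l,
  gap m.+1 h i l -> y + d = l \/ y = l + d :> nat -> rho (inord i.-1) y = None.

Definition around_gap (j : nat) : bool :=
  [exists l : 'I_m.+1, gap m.+1 h i l && (l - d < j <= l + d)].

(* Walk along the wall [i]; around each gap [l], go up through row [i - 1]
   at column [l - d], along the wall [i - 2] (whose gaps are far from [l]),
   and back down at column [l + d]. *)
Definition wall_route (j : nat) : nat := if around_gap j then i - 2 else i.

Lemma around_gapP j : around_gap j -> exists2 l, gap m.+1 h i l & l - d < j <= l + d.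
Proof. by case/existsP => l /andP[]; exists l. Qed.

Lemma not_around_gap j l : ~~ around_gap j -> gap m.+1 h i l -> ~~ (l - d < j <= l + d).
Proof.
move=> /existsPn no_detour gap_l; have [l_ge l_lt] := gap_bounds gap_l.
have l_lt' : l < m.+1 by lia.
by have := no_detour (Ordinal l_lt'); rewrite /= gap_l.
Qed.

Lemma gap_around_gap j : gap m.+1 h i j -> around_gap j.
Proof.
move=> gap_j; have [j_ge j_lt] := gap_bounds gap_j.
have j_lt' : j < m.+1 by lia.
by apply/existsP; exists (Ordinal j_lt'); rewrite /= gap_j /=; lia.
Qed.

Definition zero_at (k j : nat) : bool :=
  ~~ wall_entry m.+1 h k j || (rho (inord k) (inord j) == None).

Lemma i_le : i <= m.
Proof. by move: wall_i; rewrite /wall; lia. Qed.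

Lemma zero_at_wall k j : wall m.+1 k -> ~~ gap m.+1 h k j -> zero_at k j.
Proof. by rewrite /zero_at /wall_entry => -> ->. Qed.

Lemma zero_at_above j l : gap m.+1 h i l -> dist j l < h -> zero_at (i - 2) j.
Proof.
move=> gap_l jl_lt; have i2_odd : odd (i - 2) by move: wall_i; rewrite /wall; lia.
apply: zero_at_wall; first by move: wall_i; rewrite /wall; lia.
apply/negP => gap_j; have := gaps_shifted h_gt0 i2_odd gap_j.
by rewrite (_ : (i - 2).+2 = i); [move=> /(_ l gap_l); rewrite /dist in jl_lt *; lia | lia].
Qed.

Lemma zero_at_boundary j l k : j <= m -> gap m.+1 h i l -> j + d = l \/ j = l + d ->
  i - 2 <= k <= i -> zero_at k j.
Proof.
move=> j_le gap_l jl k_range.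
have : k = i - 2 \/ k = i - 1 \/ k = i by lia.
case=> [-> | [-> | ->]].
- by apply: zero_at_above gap_l _; rewrite /dist; lia.
- apply/orP; right; rewrite (_ : i - 1 = i.-1); last lia.
  have j_lt : j < m.+1 by lia.
  rewrite (_ : inord j = Ordinal j_lt); last by apply: val_inj; rewrite /= inordK.
  by rewrite (@unrevealed (Ordinal j_lt) l gap_l jl).
- apply: zero_at_wall wall_i _; apply/negP => gap_j.
  by have := gaps_far gap_j gap_l; rewrite /dist; lia.
Qed.

Lemma wall_route_le j : wall_route j <= m.
Proof. by have := i_le; rewrite /wall_route; case: ifP; lia. Qed.

Lemma wall_route_zeros j k : j < m -> between (wall_route j) (wall_route j.+1) k -> zero_at k j.
Proof.
rewrite /between /wall_route => j_lt.
case: (boolP (around_gap j)) => [/around_gapP[l gap_l jl] | out_j];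
  case: (boolP (around_gap j.+1)) => [in_j1 | /not_around_gap out_j1] k_range.
- have [l_ge _] := gap_bounds gap_l.
  by rewrite (_ : k = i - 2); [apply: zero_at_above gap_l _; rewrite /dist | ]; lia.
- have [l_ge _] := gap_bounds gap_l; have := out_j1 _ gap_l.
  by move=> ?; apply: (zero_at_boundary _ gap_l); lia.
- have [l gap_l j1l] := around_gapP in_j1; have [l_ge _] := gap_bounds gap_l.
  by have := not_around_gap out_j gap_l => ?; apply: (zero_at_boundary _ gap_l); lia.
- rewrite (_ : k = i); last lia.
  apply: zero_at_wall wall_i _; apply: contra out_j; exact: gap_around_gap.
Qed.

Lemma dist_wall_route_succ j : dist (wall_route j) (wall_route j.+1) <=
  2 * (((j + d) %% h.*2 == gap_offset h i) + ((j + (h.*2 - d)) %% h.*2 == gap_offset h i)).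
Proof.
rewrite /wall_route /dist.
case: (boolP (around_gap j)) => [/around_gapP[l gap_l jl] | out_j];
  case: (boolP (around_gap j.+1)) => [in_j1 | /not_around_gap out_j1]; rewrite ?subnn //.
- have [l_ge _] := gap_bounds gap_l; have := out_j1 _ gap_l => ?.
  rewrite (_ : j + (h.*2 - d) = l + h.*2); last lia.
  by rewrite modnDr (gap_mod gap_l) eqxx; case: (_ == _); lia.
- have [l gap_l j1l] := around_gapP in_j1; have [l_ge _] := gap_bounds gap_l.
  have := not_around_gap out_j gap_l => ?; rewrite (_ : j + d = l); last lia.
  by rewrite (gap_mod gap_l) eqxx; case: (_ == _); lia.
Qed.

Lemma wall_route_cost : 4 <= h -> 6 * h <= m.+1 ->
  \sum_(j < m) dist (wall_route j) (wall_route j.+1) <= m.+1.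
Proof.
move=> h_ge h_le; set u := gap_offset h i.
apply: (@leq_trans (2 * (\sum_(j < m) ((j + d) %% h.*2 == u) +
                         \sum_(j < m) ((j + (h.*2 - d)) %% h.*2 == u)))).
  by rewrite -big_split big_distrr /=; apply: leq_sum => j _; exact: dist_wall_route_succ.
have h2_gt0 : 0 < h.*2 by rewrite double_gt0.
have := count_residue_le m d u h2_gt0; have := count_residue_le m (h.*2 - d) u h2_gt0.
have := leq_divM (m + d) h.*2; have := leq_divM (m + (h.*2 - d)) h.*2.
move: (_ %/ h.*2) (_ %/ h.*2) => Q1 Q2 Q1_le Q2_le.
have : (Q1 + Q2) * 8 <= (Q1 + Q2) * h.*2 by rewrite leq_mul2l; lia.
lia.
Qed.

Lemma short_zero_path_around_gaps : 4 <= h -> 6 * h <= m.+1 ->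
  exists s, zero_path (fill0 rho) s /\ size s <= 2 * m.+1.
Proof.
move=> h_ge h_le.
have wall_route_m : wall_route m = i.
  rewrite /wall_route; case: ifP => // /around_gapP[l /gap_bounds l_bounds jl]; lia.
have last_zero : zero_at (wall_route m) m.
  by rewrite wall_route_m; apply: (zero_at_wall wall_i); apply/negP => /gap_bounds; lia.
have P_zero k j : j <= m -> k <= m -> zero_at k j -> ~~ fill0 rho (inord k) (inord j).
  by move=> j_le k_le kj_zero; apply: (not_fill0 rho_cons); rewrite wall_inputE !inordK.
have strip_zero j k : j < m -> between (wall_route j) (wall_route j.+1) k ->
    ~~ fill0 rho (inord k) (inord j).
  move=> j_lt jk; apply: P_zero (wall_route_zeros j_lt jk); first exact: ltnW.
  by move: jk; rewrite /between; have := wall_route_le j; have := wall_route_le j.+1; lia.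
have [c0 [s [s_path s_zeros c0_left s_right s_size]]] :=
  staircase_path (fun j _ => wall_route_le j) (P := fun p => ~~ fill0 rho p.2 p.1)
    strip_zero (P_zero _ _ (leqnn m) (wall_route_le m) last_zero).
exists [seq (p.2, p.1) | p <- c0 :: s]; split.
  rewrite /zero_path /bseq /= (homo_path (@adj_swap m.+1) s_path) c0_left last_map s_right.
  rewrite !eqxx !andbT /= all_map; by apply: sub_all s_zeros => p /=; rewrite eqbF_neg.
by rewrite size_map s_size; have := wall_route_cost h_ge h_le; lia.
Qed.

End ZeroPathAroundGaps.

Lemma gap_neighbour_unique n h i l l' y d d' : gap n h i l -> gap n h i l' ->
  d < h -> d' < h -> (y + d == l) || (y == l + d) -> (y + d' == l') || (y == l' + d') ->
  d = d'.
Proof.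
move=> gap_l gap_l' d_lt d'_lt yl yl'.
suff l_eq : l = l' by move: yl yl'; rewrite l_eq; lia.
apply: contraTeq isT => l_neq.
by have := gaps_far gap_l gap_l' l_neq; move: yl yl'; rewrite /dist; lia.
Qed.

Lemma fill0_no_short_one_path m h (rho : 'M[option bool]_m.+1) : 4 <= h -> 16 <= m.+1 ->
  consistent rho (wall_input m.+1 h) -> ~ has_short_1path (fill0 rho).
Proof.
move=> h_ge n_ge rho_cons [s [s_path s_size]].
have x_le i j : fill0 rho i j -> wall_entry m.+1 h i j.
  by move=> /(fill0_le rho_cons) /andP[]; rewrite wall_inputE.
by have := one_path_long h_ge n_ge x_le s_path; rewrite ltnNge s_size.
Qed.

Lemma cert_reveals_near_gap m h (rho : 'M[option bool]_m.+1) i d : 4 <= h -> 6 * h <= m.+1 ->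
  is_cert (@Hex m.+1) bar0 (wall_input m.+1 h) rho -> wall m.+1 i -> 3 <= i -> 0 < d < h ->
  exists (y : 'I_m.+1) (l : 'I_m.+1),
    [&& gap m.+1 h i l, rho (inord i.-1) y != None & (y + d == l) || (y == l + d :> nat)].
Proof.
move=> h_ge h_le [rho_cons rho_cert] wall_i i_ge /andP[d_gt0 d_lt].
suff : [exists y : 'I_m.+1, exists l : 'I_m.+1,
    [&& gap m.+1 h i l, rho (inord i.-1) y != None & (y + d == l) || (y == l + d :> nat)]].
  by case/existsP => y /existsP[l yl]; exists y, l.
apply: contraTT isT => /existsPn none.
have unrevealed (y : 'I_m.+1) l : gap m.+1 h i l -> y + d = l \/ y = l + d :> nat ->
    rho (inord i.-1) y = None.
  move=> gap_l yl; have l_lt : l < m.+1 by have := gap_bounds gap_l; lia.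
  apply/eqP; have /existsPn/(_ (Ordinal l_lt)) := none y.
  by rewrite /= gap_l; case: yl => ->; rewrite eqxx ?orbT andbT /=; exact: negbNE.
have h_gt0 : 0 < h by lia.
have n_ge : 16 <= m.+1 by lia.
have [s [s_path s_size]] :=
  short_zero_path_around_gaps h_gt0 rho_cons wall_i i_ge d_gt0 d_lt unrevealed h_ge h_le.
have no1 := fill0_no_short_one_path h_ge n_ge rho_cons.
by have := rho_cert _ (consistent_fill0 rho); rewrite (Hex_zero_path no1 s_path s_size).
Qed.

Lemma bar0_cert_size m h (rho : 'M[option bool]_m.+1) : 4 <= h -> 6 * h <= m.+1 ->
  is_cert (@Hex m.+1) bar0 (wall_input m.+1 h) rho -> (m.+1./2 - 3) * h.-1 <= psize rho.
Proof.
move=> h_ge h_le rho_cert.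
have : 2 * m.+1./2 <= m.+1 by rewrite mul2n -[X in _ <= X]odd_double_half leq_addl.
move: (m.+1./2) => H half_le.
have near (p : 'I_(H - 3) * 'I_h.-1) : exists y : 'I_m.+1, exists l : 'I_m.+1,
    [&& gap m.+1 h (2 * p.1 + 3) l, rho (inord (2 * p.1 + 2)) y != None
      & (y + p.2.+1 == l) || (y == l + p.2.+1 :> nat)].
  case: p => k e; have k_lt := ltn_ord k; have e_lt := ltn_ord e.
  have wall_k : wall m.+1 (2 * k + 3) by rewrite /wall; apply/andP; split; lia.
  have i_ge : 3 <= 2 * k + 3 by lia.
  have e1_range : 0 < e.+1 < h by lia.
  have [y [l yl]] := cert_reveals_near_gap h_ge h_le rho_cert wall_k i_ge e1_range.
  by exists y, l; rewrite (_ : 2 * k + 2 = (2 * k + 3).-1) //; lia.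
have [y y_near] := choice near.
pose f (p : 'I_(H - 3) * 'I_h.-1) : cell m.+1 := (inord (2 * p.1 + 2), y p).
have f_inj : injective f.
  move=> [k e] [k' e'] [/(congr1 val) row_eq y_eq].
  have e_lt := ltn_ord e; have e'_lt := ltn_ord e'.
  have row_lt (k0 : 'I_(H - 3)) : 2 * k0 + 2 < m.+1 by have := ltn_ord k0; lia.
  move: row_eq; rewrite /= !inordK ?row_lt // => row_eq.
  have k_eq : k = k' by apply: val_inj => /=; lia.
  subst k'; have [l /and3P[gap_l _ /= yl]] := y_near (k, e).
  have [l' /and3P[gap_l' _ /= yl']] := y_near (k, e'); rewrite -y_eq in yl'.
  congr (_, _); apply: val_inj => /=; apply/succn_inj.
  by apply: (gap_neighbour_unique gap_l gap_l' _ _ yl yl'); lia.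
have -> : (H - 3) * h.-1 = #|[set f p | p : 'I_(H - 3) * 'I_h.-1]|.
  by rewrite card_imset // card_prod !card_ord.
rewrite /psize; apply: subset_leq_card; apply/subsetP => _ /imsetP[p _ ->].
by rewrite inE /=; have [l /and3P[]] := y_near p.
Qed.

Lemma exists_sqrt n : 400 <= n ->
  exists h, [/\ 20 <= h, 6 * h <= n, h * h <= n & n <= h.+1 * h.+1].
Proof.
move=> n_ge; exists (Nat.sqrt n); have [hh_le n_lt] := Nat.sqrt_spec n (Nat.le_0_l n).
move: (Nat.sqrt n) => h in hh_le n_lt *.
move/ssrnat.leP: hh_le => hh_le; move/ssrnat.ltP: n_lt => n_lt.
have h_ge : 20 <= h.
  by rewrite leqNgt; apply/negP => h_lt; have := leq_mul h_lt h_lt; nia.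
by split; [| nia | | exact: ltnW].
Qed.

Lemma bar0_bound_nat n h : 400 <= n -> 20 <= h -> n <= h.+1 * h.+1 ->
  n * h.+1 <= 40 * ((n./2 - 3) * h.-1).
Proof.
move=> n_ge h_ge n_le; have := odd_double_half n; move: (n./2) => H n_eq.
have : n <= 4 * (H - 3) by lia.
have : h.+1 <= 2 * h.-1 by lia.
move=> /leq_mul /[apply]; nia.
Qed.

Lemma bar1_bound_nat n h : 0 < h -> h * h <= n ->
  n * h.+1 <= 40 * (n * (n %/ (20 * h)).+1).
Proof.
move=> h_gt0 hh_le; rewrite mulnCA leq_mul2l; apply/orP; right.
have d_gt0 : 0 < 20 * h by lia.
have := ltn_ceil n d_gt0; move: (n %/ (20 * h)) => K n_lt.
have : h * h < h * (20 * K.+1).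
  by rewrite (_ : h * (20 * K.+1) = K.+1 * (20 * h)); [lia | ring].
by rewrite ltn_pmul2l //; lia.
Qed.

Import Order.TTheory GRing.Theory Num.Theory.
Local Open Scope ring_scope.

Lemma powR_three_halves_le (R : realType) (n h : nat) : (n <= h.+1 * h.+1)%N ->
  (n%:R : R) `^ (3 / 2) <= (n * h.+1)%:R.
Proof.
move=> n_le; have -> : (3 / 2 : R) = 1 + 2^-1 by field.
rewrite powRD; last by apply/implyP => /eqP; lra.
rewrite powRr1 ?ler0n // powR12_sqrt ?ler0n // natrM ler_wpM2l ?ler0n //.
have -> : (h.+1%:R : R) = Num.sqrt ((h.+1 * h.+1)%:R).
  by rewrite natrM -expr2 sqrtr_sqr ger0_norm ?ler0n.
by rewrite ler_wsqrtr // ler_nat.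
Qed.

Lemma powR_three_halves_bound (R : realType) (n h C : nat) :
  (n <= h.+1 * h.+1)%N -> (n * h.+1 <= 40 * C)%N ->
  40%:R^-1 * (n%:R : R) `^ (3 / 2) <= C%:R.
Proof.
move=> n_le C_ge; rewrite ler_pdivrMl ?ltr0n //.
apply: le_trans (powR_three_halves_le R n_le) _.
by rewrite -natrM ler_nat.
Qed.

Unset Implicit Arguments.

Theorem lemma4p1 (R : realType) :
  exists c : R, 0 < c /\
  exists N : nat, forall n : nat, (N <= n)%N ->
    exists x : 'M[bool]_n,
      Hex x = None /\
      c * ((n%:R : R) `^ (3 / 2)) <= (Ccert (@Hex n) bar0 x)%:R /\
      c * ((n%:R : R) `^ (3 / 2)) <= (Ccert (@Hex n) bar1 x)%:R.
Proof.
exists 40%:R^-1; split; first by rewrite invr_gt0 ltr0n.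
exists 400%N => -[|m] n_ge //.
have [h [h_ge h_le hh_le n_le]] := exists_sqrt n_ge.
exists (wall_input m.+1 h); split; first by apply: Hex_wall_input; lia.
split; apply: (powR_three_halves_bound _ n_le).
- apply: leq_trans (bar0_bound_nat n_ge h_ge n_le) _; rewrite leq_pmul2l //.
  apply: Ccert_ge => [|rho]; last by apply: bar0_cert_size; lia.
  by apply: leq_mul; [rewrite -[X in (_ <= X)%N]odd_double_half; lia | lia].
- apply: leq_trans (bar1_bound_nat _ hh_le) _; first lia.
  rewrite leq_pmul2l // Ccert_ge // => [|rho]; last by apply: bar1_cert_size; lia.
  by rewrite leq_pmul2l // ltn_Pdiv //; lia.
Qed.
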